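(* Let $\alpha\in(0,1)$ and let $\bm A,\bm B\in\mathbb{C}^{N\times N}$ be orthogonal projection matrices. Define $\widetilde\Delta_0=\operatorname{Tr}(\bm A)-\alpha N$ and, for $k\ge1$, $$\widetilde\Delta_k=-\sum_{a=0}^{k-1}\widetilde\Delta_a\sum_{j=1}^{k-1}(-\alpha)^{k-j}q_{k,j,a}(1)+\mathbf 1\{k\text{ odd}\}\,2\alpha^k\big(\operatorname{Tr}(\bm B)-\tfrac12N\big)+\operatorname{Tr}\Big(\big((\bm A-\alpha\bm I_N)(2\bm B-\bm I_N)\big)^k\Big).$$ Also define $\widetilde\delta_0=\operatorname{Tr}(\bm A)-\alpha N$ and, for $k\ge1$, $$\widetilde\delta_k=\operatorname{Tr}\Big(\big((\bm A-\alpha\bm I_N)(2\bm B-\bm I_N)\big)^k\Big)+\mathbf 1\{k\text{ even}\}\,2\alpha^k\big(\operatorname{Tr}(\bm A)-\alpha N\big)+\mathbf 1\{k\text{ odd}\}\,2\alpha^k\big(\operatorname{Tr}(\bm B)-\tfrac12N\big).$$ Then for all $k\ge1$, $$\widetilde\Delta_k=\sum_{\substack{0\le a\le k\\ a\equiv k\ (\mathrm{mod}\ 2)}}\binom{k}{\frac{k+a}2}(\alpha(1-\alpha))^{\frac{k-a}2}\,\widetilde\delta_a.$$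
   Context: For $k\ge1$ and a nonempty $S=\{s_1<\dots<s_j\}\subseteq[k]$, define $p_1(S)=s_2-s_1,\dots,p_{j-1}(S)=s_j-s_{j-1}$, $p_j(S)=k+s_1-s_j$. For $1\le j\le k$ and $0\le a\le j$ define $$q_{k,j,a}(x)=\sum_{S\subseteq[k],\,|S|=j}\ \sum_{A\subseteq[j],\,|A|=a}\ \prod_{i=1}^j\Big(\sum_{b=0}^{p_i(S)-1}(-1)^{p_i(S)-1-b}x^b+(-1)^{p_i(S)}\mathbf 1\{i\notin A\}\Big),$$ and set $q_{k,0,0}=0$ and $q_{k,j,a}=0$ when $a>j$. *)

From HB Require Import structures.
From mathcomp Require Import all_boot all_order all_algebra.
From mathcomp Require Import complex.
Set Implicit Arguments. Unset Strict Implicit. Unset Printing Implicit Defensive.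
Import Order.TTheory GRing.Theory Num.Theory.
Local Open Scope ring_scope.

Definition ctrmx (C : numClosedFieldType) (m n : nat) (A : 'M[C]_(m, n)) : 'M[C]_(n, m) :=
  (map_mx Num.conj A)^T.

Definition orth_proj (C : numClosedFieldType) (N : nat) (A : 'M[C]_N) : Prop :=
  A *m A = A /\ ctrmx A = A.

(* The increasing list s_1 < ... < s_j of the elements of S (as naturals;
   S is a subset of 'I_k, i.e. {0,...,k-1}, a shift of [k] that does not
   affect the differences p_i). *)
Definition sortedS (k : nat) (S : {set 'I_k}) : seq nat :=
  sort leq [seq val i | i <- enum S].

(* p_i(S), with i 0-based: p_i = s_{i+1} - s_i for i < j-1, and
   p_{j-1} = k + s_1 - s_j. *)
Definition pS (k : nat) (S : {set 'I_k}) (i : nat) : nat :=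
  let s := sortedS S in
  let j := size s in
  (if i.+1 < j then nth 0 s i.+1 - nth 0 s i
  else k + nth 0 s 0 - nth 0 s j.-1)%N.

Definition qkja (R : comRingType) (k j a : nat) (x : R) : R :=
  if (j == 0)%N || (j < a)%N then 0 else
  \sum_(S : {set 'I_k} | #|S| == j)
    \sum_(A : {set 'I_j} | #|A| == a)
      \prod_(i < j)
        ((\sum_(b < pS S i) (-1) ^+ (pS S i - 1 - b)%N * x ^+ b)
         + (-1) ^+ (pS S i) * (if i \in A then 0 else 1)).

Section Deltas.
Variables (C : numClosedFieldType) (N : nat) (alpha : C) (A B : 'M[C]_N).

Definition trT (k : nat) : C :=
  \tr (((A - alpha%:M) *m (2%:R *: B - 1%:M)) ^+ k).

Definition d0 : C := \tr A - alpha * N%:R.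
Definition dB : C := \tr B - N%:R / 2%:R.

Definition delta_t (k : nat) : C :=
  if k == 0%N then d0 else
  trT k + (if ~~ odd k then 2%:R * alpha ^+ k * d0 else 0)
        + (if odd k then 2%:R * alpha ^+ k * dB else 0).

Definition Delta_next (k : nat) (prev : seq C) : C :=
  - (\sum_(a < k) prev`_a *
       \sum_(1 <= j < k) (- alpha) ^+ (k - j) * qkja k j a 1)
  + (if odd k then 2%:R * alpha ^+ k * dB else 0)
  + trT k.

Fixpoint Deltas (k : nat) : seq C :=
  match k with
  | 0 => [:: d0]
  | k'.+1 => rcons (Deltas k') (Delta_next k (Deltas k'))
  end.

Definition Delta_t (k : nat) : C := nth 0 (Deltas k) k.

End Deltas.

From HB Require Import structures.
From mathcomp Require Import all_boot all_order all_algebra.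
From mathcomp Require Import complex.
From mathcomp Require Import ring zify.
Set Implicit Arguments. Unset Strict Implicit. Unset Printing Implicit Defensive.
Import Order.TTheory GRing.Theory Num.Theory.
Local Open Scope ring_scope.

(* The identity is a purely combinatorial statement about the recursion
   defining Delta_k: the matrices only enter through the numbers trT k, d0
   and dB.  The proof has four steps.
   1. q_{k,j,a}(1) counts the j-subsets S of [k] with exactly a odd gaps
      p_i(S), so that sum_j (-alpha)^(k-j) q_{k,j,a}(1) is the a-th
      coefficient of the gap polynomial
        F_k(X) = sum_{S <> 0} (-alpha)^(k-|S|) X^(#odd gaps of S).
   2. Splitting subsets of [k+1] according to whether they contain k gives
      a linear transfer recursion for F_k, from which
        F_k = D_k - alpha^k - (-alpha)^k,
      where D_k is the Dickson polynomial: D_0 = 2, D_1 = X,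
      D_(n+2) = X D_(n+1) - beta D_n with beta = alpha (1 - alpha).
   3. X^b = sum_i C(b,i) beta^i D_(b-2i) (with D_0 read as 1).
   4. Let R_b denote the right-hand side of the theorem and L the linear
      form X^c |-> R_c.  By 3, L(D_b) = delta_b, and by 1 and 2 the
      sequence R then obeys the recursion defining Delta, whence
      Delta_k = R_k for all k. *)

Lemma sortedS_lt k (S : {set 'I_k}) : sorted ltn (sortedS S).
Proof.
rewrite ltn_sorted_uniq_leq sort_uniq (sort_sorted leq_total) andbT.
by rewrite map_inj_uniq ?enum_uniq //; exact: val_inj.
Qed.

Lemma mem_sortedS k (S : {set 'I_k}) x :
  (x \in sortedS S) = [exists i : 'I_k, (i \in S) && (val i == x)].
Proof.
rewrite /sortedS mem_sort; apply/mapP/existsP => [[i Hi ->]|[i /andP[Hi /eqP <-]]].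
  by exists i; rewrite -mem_enum Hi eqxx.
by exists i; rewrite ?mem_enum.
Qed.

Lemma sortedS_bound k (S : {set 'I_k}) x : x \in sortedS S -> (x < k)%N.
Proof. by rewrite mem_sortedS => /existsP[i /andP[_ /eqP <-]]; exact: ltn_ord. Qed.

Lemma size_sortedS k (S : {set 'I_k}) : size (sortedS S) = #|S|.
Proof. by rewrite /sortedS size_sort size_map cardE. Qed.

Lemma sortedS_eq_nil k (S : {set 'I_k}) : (sortedS S == [::]) = (S == set0).
Proof. by rewrite -size_eq0 size_sortedS cards_eq0. Qed.

Lemma sortedS_setT k : sortedS [set: 'I_k] = iota 0 k.
Proof.
apply: (irr_sorted_eq ltn_trans ltnn) => [||x]; [exact: sortedS_lt|exact: iota_ltn_sorted|].
rewrite mem_iota add0n; apply/idP/idP => [/sortedS_bound //|Hx].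
by rewrite mem_sortedS; apply/existsP; exists (Ordinal Hx); rewrite inE eqxx.
Qed.

(* A subset of 'I_n.+1 is a subset of 'I_n together with the information
   whether it contains the new top element n. *)
Definition extS n (S : {set 'I_n}) (b : bool) : {set 'I_n.+1} :=
  [set i | if unlift ord_max i is Some j then j \in S else b].

Definition restrS n (S : {set 'I_n.+1}) : {set 'I_n} :=
  [set j | lift ord_max j \in S].

Lemma extS_bij n :
  {on [pred S | true], bijective (fun p : {set 'I_n} * bool => extS p.1 p.2)}.
Proof.
exists (fun S => (restrS S, ord_max \in S)) => [[S b] _|S _] /=.
  by congr (_, _); [apply/setP => j; rewrite !inE liftK | rewrite inE unlift_none].
by apply/setP => i; rewrite inE; case: unliftP => [j ->|->]; rewrite ?inE.
Qed.

Lemma mem_sortedS_ext n (S : {set 'I_n}) b x :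
  (x \in sortedS (extS S b)) = (x \in sortedS S) || (b && (x == n)).
Proof.
have val_lift (j : 'I_n) : val (lift ord_max j) = j.
  by rewrite /= /bump leqNgt ltn_ord.
rewrite !mem_sortedS; apply/existsP/orP => [[i /andP[]]|].
  rewrite inE; case: unliftP => [j ->|->] Hj /eqP <-.
    by left; apply/existsP; exists j; rewrite Hj val_lift eqxx.
  by right; rewrite Hj eqxx.
case=> [/existsP[j /andP[Hj /eqP <-]]|/andP[Hb /eqP ->]].
  by exists (lift ord_max j); rewrite inE liftK Hj val_lift eqxx.
by exists ord_max; rewrite inE unlift_none Hb eqxx.
Qed.

Lemma sortedS_ext0 n (S : {set 'I_n}) : sortedS (extS S false) = sortedS S.
Proof.
apply: (irr_sorted_eq ltn_trans ltnn); rewrite ?sortedS_lt // => x.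
by rewrite mem_sortedS_ext orbF.
Qed.

Lemma sortedS_ext1 n (S : {set 'I_n}) :
  sortedS (extS S true) = rcons (sortedS S) n.
Proof.
apply: (irr_sorted_eq ltn_trans ltnn); rewrite ?sortedS_lt //; last first.
  by move=> x; rewrite mem_sortedS_ext mem_rcons in_cons orbC.
have := sortedS_lt S; have := @sortedS_bound n S.
case: (sortedS S) => [|y p] //= Hb Hp.
by rewrite rcons_path Hp /= Hb // mem_last.
Qed.

Lemma big_sortedS_split (V : nmodType) n (g : seq nat -> V) :
  \sum_(S : {set 'I_n.+1}) g (sortedS S) =
  \sum_(S : {set 'I_n}) (g (sortedS S) + g (rcons (sortedS S) n)).
Proof.
rewrite (reindex _ (extS_bij n)) /=.
rewrite -(pair_bigA _ (fun S b => g (sortedS (extS S b)))) /=; apply: eq_bigr => S _.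
by rewrite big_bool /= sortedS_ext0 sortedS_ext1 addrC.
Qed.

(* Gaps of a list s = [s_0 < ... < s_(j-1)] of points of the cycle Z/k:
   gap k s i = p_(i+1)(S) when s = sortedS S. *)
Definition gap (k : nat) (s : seq nat) (i : nat) : nat :=
  (if i.+1 < size s then nth 0 s i.+1 - nth 0 s i
   else k + nth 0 s 0 - nth 0 s (size s).-1)%N.

Definition odd_gaps (k : nat) (s : seq nat) : nat :=
  count (fun i => odd (gap k s i)) (iota 0 (size s)).

Definition inner_odd_gaps (s : seq nat) : nat :=
  count (fun i => odd (nth 0 s i.+1 - nth 0 s i)%N) (iota 0 (size s).-1).

Lemma odd_gaps_inner k s : s != [::] ->
  odd_gaps k s = (inner_odd_gaps s + odd (k + head 0%N s - last 0%N s))%N.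
Proof.
case: s => // x p _; rewrite /odd_gaps /inner_odd_gaps -[(size _).-1]/(size p).
rewrite -[size _]/(size p).+1 -addn1 iotaD count_cat /= add0n addn0; congr (_ + _)%N.
  by apply: eq_in_count => i; rewrite mem_iota add0n /gap /= ltnS => ->.
by have /= last_eq := nth_last 0%N (x :: p); rewrite /gap /= ltnn last_eq.
Qed.

Lemma inner_odd_gaps_rcons s x : s != [::] ->
  inner_odd_gaps (rcons s x) = (inner_odd_gaps s + odd (x - last 0%N s))%N.
Proof.
case: s => // y p _; rewrite /inner_odd_gaps size_rcons -[(size _).+1.-1]/(size p).+1.
rewrite -[(size _).-1]/(size p) -addn1 iotaD count_cat /= add0n addn0; congr (_ + _)%N.
  apply: eq_in_count => i; rewrite mem_iota add0n => /andP[_ Hi].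
  by rewrite -rcons_cons !nth_rcons /= Hi ltnS ltnW.
have /= last_eq := nth_last 0%N (y :: p).
by rewrite -rcons_cons !nth_rcons /= ltnn eqxx ltnSn last_eq.
Qed.

(* All k gaps of the full cycle have length 1. *)
Lemma odd_gaps_iota k : (0 < k)%N -> odd_gaps k (iota 0 k) = k.
Proof.
move=> k_gt0; rewrite /odd_gaps size_iota -[RHS](size_iota 0) -count_predT.
apply: eq_in_count => i; rewrite mem_iota add0n /gap size_iota /= => Hi.
case: ifP => H; first by rewrite !nth_iota // ?add0n ?subSn ?subnn // ltnW.
rewrite !nth_iota ?prednK ?add0n ?addn0 ?leq_pred //.
by rewrite -[k in (k - _)%N](prednK k_gt0) subSn ?subnn.
Qed.

(* Evaluated at x = 1, the i-th factor of q_{k,j,a} is the indicator of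
   "i \in A iff p_i is odd"; hence q_{k,j,a}(1) counts j-subsets by their
   number of odd gaps. *)
Lemma sum_alt_signs (R : nzRingType) p :
  \sum_(b < p) (-1) ^+ (p - 1 - b)%N = (odd p)%:R :> R.
Proof.
elim: p => [|p IH]; first by rewrite big_ord0.
rewrite big_ord_recr /= subSS subn0 subnn expr0.
rewrite (eq_bigr (fun b : 'I_p => - (-1) ^+ (p - 1 - b)%N)); last first.
  move=> i _; have := ltn_ord i => i_lt_p.
  by rewrite (_ : (p - i = (p - 1 - i).+1)%N) ?exprS ?mulN1r //; lia.
by rewrite sumrN IH; case: (odd p); rewrite /= ?addNr ?oppr0 ?add0r.
Qed.

Lemma qfactor_at1 (R : nzRingType) p (b : bool) :
  \sum_(c < p) (-1) ^+ (p - 1 - c)%N * 1 ^+ c + (-1) ^+ p * (if b then 0 else 1)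
  = (b == odd p)%:R :> R.
Proof.
under eq_bigr do rewrite expr1n mulr1.
rewrite sum_alt_signs -signr_odd.
by case: b; case: (odd p); rewrite /= ?mulr0 ?addr0 ?mulr1 ?expr1 ?subrr ?expr0 ?add0r.
Qed.

Lemma prod_indicator_set (R : comNzRingType) j (A : {set 'I_j}) (c : pred 'I_j) :
  \prod_(i < j) ((i \in A) == c i)%:R = (A == [set i | c i])%:R :> R.
Proof.
have [->|neqA] := eqVneq A [set i | c i].
  by rewrite big1 // => i _; rewrite inE eqxx.
have [i /negPf Hi|allA] := pickP (fun i => (i \in A) != c i).
  by rewrite (bigD1 i) //= Hi mul0r.
by case/eqP: neqA; apply/setP => i; rewrite inE; move/negbFE/eqP: (allA i).
Qed.

Lemma card_set_ord j (P : pred nat) : #|[set i : 'I_j | P i]| = count P (iota 0 j).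
Proof. by rewrite cardsE cardE size_filter /enum_mem -enumT -val_enum_ord count_map. Qed.

Lemma qkja_at1 (R : comNzRingType) k j a : (0 < j)%N ->
  qkja k j a (1 : R) =
  \sum_(S : {set 'I_k} | #|S| == j) (odd_gaps k (sortedS S) == a)%:R.
Proof.
move=> j_gt0; rewrite /qkja eqn0Ngt j_gt0 /=.
have gap_le (S : {set 'I_k}) : (odd_gaps k (sortedS S) <= #|S|)%N.
  by rewrite -size_sortedS /odd_gaps -[X in (_ <= X)%N](size_iota 0) count_size.
case: ltnP => Hja.
  rewrite big1 // => S /eqP HS; case: eqP => // Ha.
  by have := gap_le S; rewrite HS Ha leqNgt Hja.
apply: eq_bigr => S /eqP HS.
under eq_bigr do under eq_bigr do rewrite qfactor_at1.
under eq_bigr do rewrite (prod_indicator_set _ _ (fun i => odd (pS S i))).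
set T := [set i : 'I_j | odd (pS S i)].
rewrite big_mkcond (bigD1 T) //= eqxx big1 ?addr0 => [|A0 /negPf ->]; last by case: ifP.
by rewrite /T (card_set_ord _ (fun n => odd (pS S n))) /odd_gaps size_sortedS HS; case: eqP.
Qed.

Lemma big_nat_pick (V : nmodType) m n c (g : nat -> V) :
  \sum_(m <= j < n) (if c == j then g j else 0) = if (m <= c < n)%N then g c else 0.
Proof.
elim: n => [|n IH]; first by rewrite big_geq // ltn0 andbF.
have [le_mn|lt_nm] := leqP m n; last by rewrite big_geq //; case: ifP => //; lia.
rewrite big_nat_recr //= IH; have [->|neq_cn] := eqVneq c n.
  by rewrite ltnn andbF add0r ltnSn le_mn.
by rewrite addr0 ltnS (leq_eqVlt c) (negPf neq_cn).
Qed.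

Section GapPolynomial.
Variables (R : comNzRingType) (a : R).
Local Notation A := (a%:P : {poly R}).

Definition weight n (s : seq nat) : {poly R} := (- A) ^+ (n - size s).

Definition gap_poly n : {poly R} := \sum_(S : {set 'I_n})
  (if sortedS S != [::] then weight n (sortedS S) * 'X^(odd_gaps n (sortedS S)) else 0).

Lemma coef_gap_poly k i : (i < k)%N ->
  \sum_(1 <= j < k) (- a) ^+ (k - j) * qkja k j i 1 = (gap_poly k)`_i.
Proof.
move=> lt_ik; rewrite (eq_big_nat _ _ (F2 := fun j => \sum_(S : {set 'I_k})
   (if #|S| == j then (- a) ^+ (k - j) * (odd_gaps k (sortedS S) == i)%:R else 0)));
  last first.
  move=> j /andP[j_gt0 _]; rewrite qkja_at1 // mulr_sumr big_mkcond /=.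
  by apply: eq_bigr => S _; case: ifP; rewrite ?mulr0.
rewrite exchange_big /= /gap_poly coef_sum; apply: eq_bigr => S _.
rewrite big_nat_pick sortedS_eq_nil /weight size_sortedS.
have [->|S_neq0] := eqVneq S set0; first by rewrite cards0 coef0.
rewrite card_gt0 S_neq0 /= -rmorphN -rmorphXn coefCM coefXn.
have [lt_Sk|ge_Sk] := ltnP #|S| k; first by rewrite eq_sym.
have -> : S = [set: 'I_k].
  by apply/eqP; rewrite eqEcard subsetT cardsT card_ord ge_Sk.
rewrite sortedS_setT odd_gaps_iota ?(leq_ltn_trans _ lt_ik) //.
by rewrite (ltn_eqF lt_ik) mulr0.
Qed.

(* Transfer recursion.  path_poly n h z refines F_n by the parity h of the
   first point of S and the parity z of the trailing distance n - last(S),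
   recording only the inner odd gaps; adding the point n to S closes a
   gap of parity z. *)
Definition tail_parity n (h z : bool) (s : seq nat) :=
  [&& s != [::], odd (head 0%N s) == h & odd (last 0%N s) == z (+) odd n].

Definition path_term n h z (s : seq nat) : {poly R} :=
  if tail_parity n h z s then weight n s * 'X^(inner_odd_gaps s) else 0.

Definition path_poly n h z : {poly R} :=
  \sum_(S : {set 'I_n}) path_term n h z (sortedS S).

(* Contribution of the singleton {n} when the point n is added. *)
Definition singleton_poly n (h : bool) : {poly R} :=
  if odd n == h then (- A) ^+ n else 0.

Lemma path_poly0 h z : path_poly 0 h z = 0.
Proof.
rewrite /path_poly big1 // => S _; have -> : S = set0 by apply/setP => -[].
by rewrite /path_term /tail_parity sortedS_eq_nil eqxx.
Qed.

Lemma weightS n (S : {set 'I_n}) : weight n.+1 (sortedS S) = - A * weight n (sortedS S).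
Proof.
rewrite /weight size_sortedS subSn ?exprS //.
by rewrite -[X in (_ <= X)%N](card_ord n) max_card.
Qed.

Lemma weight_rcons n s : weight n.+1 (rcons s n) = weight n s.
Proof. by rewrite /weight size_rcons subSS. Qed.

Lemma last_sortedS n (S : {set 'I_n}) : sortedS S != [::] -> (last 0%N (sortedS S) < n)%N.
Proof.
by case E: (sortedS S) => [|x p] // _; apply: (@sortedS_bound n S); rewrite E /= mem_last.
Qed.

(* Sets not containing n are only reweighted; the tail parity flips. *)
Lemma tail_parity_S n h z (S : {set 'I_n}) :
  tail_parity n.+1 h z (sortedS S) = tail_parity n h (~~ z) (sortedS S).
Proof. by rewrite /tail_parity /=; case: (odd n); case: z. Qed.

Lemma path_polyS_even n h : path_poly n.+1 h false = - A * path_poly n h true.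
Proof.
rewrite /path_poly (big_sortedS_split _ (path_term _ h _)) big_split /= mulr_sumr.
rewrite [X in _ + X]big1 ?addr0.
  apply: eq_bigr => S _; rewrite /path_term weightS tail_parity_S /=.
  by case: ifP; rewrite ?mulr0 // mulrA.
move=> S _; rewrite /path_term /tail_parity last_rcons /=.
by case: (odd n); rewrite /= ?andbF.
Qed.

(* Adding n to a nonempty set closes its trailing gap. *)
Lemma path_term_rcons n h (S : {set 'I_n}) : S != set0 ->
  path_term n.+1 h true (rcons (sortedS S) n) =
  path_term n h false (sortedS S) + 'X * path_term n h true (sortedS S).
Proof.
rewrite -sortedS_eq_nil => s_neq0; have last_lt := last_sortedS s_neq0.
move: s_neq0 last_lt; rewrite /path_term weight_rcons.
case: (sortedS S) => [|x p] // _ /= last_lt.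
rewrite -rcons_cons inner_odd_gaps_rcons // /tail_parity last_rcons /=.
rewrite oddB ?(ltnW last_lt) //.
rewrite exprD; case: (odd x == h); rewrite /= ?mulr0 ?addr0 //.
by case: (odd n); case: (odd (last x p));
  rewrite /= ?mulr0 ?addr0 ?add0r ?expr0 ?expr1 ?mulr1; ring.
Qed.

Lemma path_polyS_odd n h : path_poly n.+1 h true =
  - A * path_poly n h false + path_poly n h false + 'X * path_poly n h true
  + singleton_poly n h.
Proof.
rewrite /path_poly (big_sortedS_split _ (path_term _ h _)) big_split /= mulr_sumr.
rewrite -!addrA; congr (_ + _).
  apply: eq_bigr => S _; rewrite /path_term weightS tail_parity_S /=.
  by case: ifP; rewrite ?mulr0 // mulrA.
have sorted0 : sortedS (set0 : {set 'I_n}) = [::] by apply/eqP; rewrite sortedS_eq_nil.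
rewrite mulr_sumr addrA -big_split /= (bigD1 set0) //= [in RHS](bigD1 set0) //= sorted0.
rewrite {3 4}/path_term /tail_parity /= mulr0 !add0r addrC; congr (_ + _).
  by apply: eq_bigr => S; exact: path_term_rcons.
rewrite /path_term /tail_parity /singleton_poly /weight /inner_odd_gaps /=.
rewrite subSS subn0 expr0 mulr1.
by case: (odd n); case: h.
Qed.

(* F_n assembled from the path polynomials: the wrap-around gap has the
   parity of (first point) + (trailing distance). *)
Lemma gap_poly_paths n : gap_poly n =
  path_poly n false false + 'X * path_poly n false true
  + 'X * path_poly n true false + path_poly n true true.
Proof.
rewrite /gap_poly /path_poly !mulr_sumr -!big_split /=; apply: eq_bigr => S _.
rewrite /path_term; case: ifP => s_neq0; last by rewrite /tail_parity s_neq0 /= !mulr0 !addr0.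
rewrite odd_gaps_inner // oddB ?oddD; last by rewrite ltnW // ltn_addr // last_sortedS.
rewrite /tail_parity s_neq0 /= exprD.
by case: (odd n); case: (odd (head 0%N (sortedS S))); case: (odd (last 0%N (sortedS S)));
  rewrite /= ?mulr0 ?addr0 ?add0r; ring.
Qed.

Local Notation beta := (A * (1 - A)).

Fixpoint dickson n : {poly R} :=
  match n with
  | 0 => 2%:R
  | 1 => 'X
  | (m.+1 as m1).+1 => 'X * dickson m1 - beta * dickson m
  end.

Lemma dickson0 : dickson 0 = 2%:R. Proof. by []. Qed.
Lemma dickson1 : dickson 1 = 'X. Proof. by []. Qed.
Lemma dicksonSS n : dickson n.+2 = 'X * dickson n.+1 - beta * dickson n.
Proof. by []. Qed.

(* F_n and D_n - a^n - (-a)^n both satisfy the fourth-order recursion with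
   characteristic polynomial (Y^2 - X Y + beta) (Y^2 - a^2). *)
Definition satisfies_rec4 (u : nat -> {poly R}) :=
  forall n, u n.+4 = 'X * u n.+3 - (beta - A ^+ 2) * u n.+2
                     - A ^+ 2 * 'X * u n.+1 + A ^+ 2 * beta * u n.

Lemma rec4_eq u v : satisfies_rec4 u -> satisfies_rec4 v ->
  u 0 = v 0 -> u 1 = v 1 -> u 2 = v 2 -> u 3 = v 3 -> u =1 v.
Proof.
move=> ru rv e0 e1 e2 e3 n.
suff: [/\ u n = v n, u n.+1 = v n.+1, u n.+2 = v n.+2 & u n.+3 = v n.+3] by case.
elim: n => [|n [en en1 en2 en3]]; first by split.
by split => //; rewrite ru rv en en1 en2 en3.
Qed.

Lemma gap_poly_rec4 : satisfies_rec4 gap_poly.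
Proof.
move=> n; rewrite !gap_poly_paths.
do 4 rewrite ?path_polyS_even ?path_polyS_odd.
by rewrite /singleton_poly /=; case: (odd n) => /=; rewrite ?exprS; ring.
Qed.

Lemma dickson_shift_rec4 :
  satisfies_rec4 (fun n => dickson n - A ^+ n - (- A) ^+ n).
Proof. by move=> n; rewrite !dicksonSS ?exprS; ring. Qed.

Lemma gap_poly_dickson n : gap_poly n = dickson n - A ^+ n - (- A) ^+ n.
Proof.
apply: (rec4_eq gap_poly_rec4 dickson_shift_rec4) => /=;
  rewrite gap_poly_paths;
  do 3 rewrite ?path_polyS_even ?path_polyS_odd;
  rewrite !path_poly0 /singleton_poly /= ?exprS ?expr0; ring.
Qed.

Arguments dickson : simpl never.

(* The basis of {poly R} used to expand the powers of X: D_n, except that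
   D_0 = 2 is replaced by 1. *)
Definition dbasis n : {poly R} := if n is 0 then 1 else dickson n.
Arguments dbasis : simpl never.

Definition bet : R := a * (1 - a).

Lemma betaE : beta = bet%:P.
Proof. by rewrite /bet rmorphM rmorphB rmorph1. Qed.

Definition expand_coef n i : R := 'C(n, i)%:R * bet ^+ i.

Lemma X_dbasisSS n : 'X * dbasis n.+2 = dbasis n.+3 + beta * dbasis n.+1.
Proof. by rewrite /dbasis (dicksonSS n.+1); ring. Qed.

Lemma X_dbasis1 : 'X * dbasis 1 = dbasis 2 + beta * dbasis 0 + beta * dbasis 0.
Proof. by rewrite /dbasis dicksonSS dickson1 dickson0; ring. Qed.

Lemma X_dbasis0 : 'X * dbasis 0 = dbasis 1.
Proof. by rewrite /dbasis dickson1 mulr1. Qed.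

Lemma expand_coefS n i : expand_coef n.+1 i.+1 = expand_coef n i.+1 + bet * expand_coef n i.
Proof. by rewrite /expand_coef binS natrD exprS; ring. Qed.

Lemma expand_coef0 n : expand_coef n 0 = 1.
Proof. by rewrite /expand_coef bin0 mulr1. Qed.

Lemma expand_coef_mid m : expand_coef (2 * m).+1 m.+1 = bet * expand_coef (2 * m).+1 m.
Proof.
rewrite /expand_coef exprS -(bin_sub (n := (2 * m).+1) (m := m)); last by lia.
have -> : ((2 * m).+1 - m = m.+1)%N by lia.
by rewrite mulrCA.
Qed.

(* The expansion  sum_(i <= b/2) C(b,i) bet^i D'_(b-2i)  of X^b, where D'
   is dbasis; multiplying it by X is Pascal's rule on the coefficients,
   the case of odd b needing care at the middle term. *)
Definition expansion b : {poly R} :=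
  \sum_(0 <= i < b./2.+1) (expand_coef b i)%:P * dbasis (b - 2 * i).

Lemma half2 m : (2 * m)./2 = m.
Proof. by rewrite mul2n half_double. Qed.

Lemma halfS2 m : (2 * m).+1./2 = m.
Proof. by rewrite mul2n /= uphalf_double. Qed.

Local Notation eterm n i m := ((expand_coef n i)%:P * dbasis m).

(* For even b only the last term, X * D'_0 = D'_1, is special. *)
Lemma X_expansion_even m : 'X * expansion (2 * m) = expansion (2 * m).+1.
Proof.
rewrite /expansion half2 halfS2 mulr_sumr big_nat_recr //=.
rewrite [RHS]big_nat_recl // expand_coef0 polyC1 mul1r.
rewrite (eq_big_nat _ _ (F2 := fun i => eterm (2 * m) i ((2 * m).+1 - 2 * i)
   + beta * (eterm (2 * m) i ((2 * m).+1 - 2 * i.+1)))); last first.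
  move=> i /andP[_ lt_im].
  have -> : (2 * m - 2 * i = (2 * m - 2 * i - 2).+2)%N by lia.
  have -> : ((2 * m).+1 - 2 * i = (2 * m - 2 * i - 2).+3)%N by lia.
  have -> : ((2 * m).+1 - 2 * i.+1 = (2 * m - 2 * i - 2).+1)%N by lia.
  by rewrite mulrCA X_dbasisSS; ring.
rewrite big_split /= subnn mulrCA X_dbasis0.
rewrite (eq_big_nat _ _ (F1 := fun i => eterm (2 * m).+1 i.+1 ((2 * m).+1 - 2 * i.+1))
  (F2 := fun i => eterm (2 * m) i.+1 ((2 * m).+1 - 2 * i.+1)
       + beta * (eterm (2 * m) i ((2 * m).+1 - 2 * i.+1)))); last first.
  by move=> i _; rewrite expand_coefS /bet; ring.
rewrite big_split /= addrAC [RHS]addrA; congr (_ + _).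
have -> : dbasis 1 = dbasis ((2 * m).+1 - 2 * m) by congr dbasis; lia.
rewrite -(big_nat_recr m 0 (fun i => eterm (2 * m) i ((2 * m).+1 - 2 * i))) //.
by rewrite big_nat_recl // expand_coef0 polyC1 mul1r muln0 subn0.
Qed.

(* For odd b the last term X * D'_1 = D'_2 + 2 beta D'_0 produces the new
   middle coefficient C(b+1, (b+1)/2) bet^((b+1)/2). *)
Lemma X_expansion_odd m : 'X * expansion (2 * m).+1 = expansion (2 * m.+1).
Proof.
have two_mS : (2 * m.+1 = (2 * m).+2)%N by lia.
rewrite /expansion two_mS halfS2 [((2 * m).+2)./2]/= half2 mulr_sumr big_nat_recr //.
rewrite (eq_big_nat _ _ (F2 := fun i => eterm (2 * m).+1 i ((2 * m).+2 - 2 * i)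
   + beta * (eterm (2 * m).+1 i (2 * m - 2 * i)))); last first.
  move=> i /andP[_ lt_im].
  have [n n_eq] : exists n, (2 * m - 2 * i = n.+1)%N by exists (2 * m - 2 * i).-1; lia.
  have -> : ((2 * m).+1 - 2 * i = n.+2)%N by lia.
  have -> : ((2 * m).+2 - 2 * i = n.+3)%N by lia.
  by rewrite n_eq mulrCA X_dbasisSS; ring.
have -> : ((2 * m).+1 - 2 * m = 1)%N by lia.
rewrite mulrCA X_dbasis1 big_split /=.
rewrite big_nat_recl // expand_coef0 polyC1 mul1r muln0 subn0.
rewrite (eq_big_nat _ _ (F1 := fun i => eterm (2 * m).+2 i.+1 ((2 * m).+2 - 2 * i.+1))
  (F2 := fun i => eterm (2 * m).+1 i.+1 (2 * m - 2 * i)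
       + beta * (eterm (2 * m).+1 i (2 * m - 2 * i)))); last first.
  move=> i _; have -> : ((2 * m).+2 - 2 * i.+1 = 2 * m - 2 * i)%N by lia.
  by rewrite expand_coefS /bet; ring.
rewrite big_split /= !(big_nat_recr m 0) // subnn expand_coef_mid.
have top_shift :
  \sum_(0 <= i < m) eterm (2 * m).+1 i ((2 * m).+2 - 2 * i) =
  dbasis (2 * m).+2 + \sum_(0 <= i < m) eterm (2 * m).+1 i.+1 (2 * m - 2 * i)
  - eterm (2 * m).+1 m 2.
  apply/eqP; rewrite eq_sym subr_eq; apply/eqP.
  have -> : dbasis 2 = dbasis ((2 * m).+2 - 2 * m) by congr dbasis; lia.
  rewrite -(big_nat_recr m 0 (fun i => eterm (2 * m).+1 i ((2 * m).+2 - 2 * i))) //.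
  rewrite big_nat_recl // expand_coef0 polyC1 mul1r muln0 subn0; congr (_ + _).
  by apply: eq_big_nat => i _; congr (_ * dbasis _); lia.
by rewrite top_shift /= /bet; ring.
Qed.

Lemma X_expansion b : 'X * expansion b = expansion b.+1.
Proof.
rewrite -[b]odd_double_half -mul2n; case: (odd b) => /=.
  by rewrite add1n X_expansion_odd mulnS.
by rewrite add0n X_expansion_even.
Qed.

Lemma expX_expansion b : 'X ^+ b = expansion b.
Proof.
elim: b => [|b IH]; last by rewrite exprS IH X_expansion.
by rewrite /expansion big_nat1 expand_coef0 mul1r.
Qed.

Lemma coef_dickson_gt n i : (n < i)%N -> (dickson n)`_i = 0.
Proof.
elim/ltn_ind: n i => -[|[|n]] IH i lt_ni.
- by rewrite dickson0 coefMn coef1 gtn_eqF // mul0rn.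
- by rewrite dickson1 coefX gtn_eqF.
case: i lt_ni => [//|i] lt_ni.
rewrite dicksonSS betaE coefB coefXM coefCM /= !IH ?mulr0 ?subr0 //; lia.
Qed.

Lemma coef_dickson_lead n : (0 < n)%N -> (dickson n)`_n = 1.
Proof.
case: n => // n _; elim: n => [|n IH]; first by rewrite dickson1 coefX.
by rewrite dicksonSS betaE coefB coefXM coefCM /= IH coef_dickson_gt ?mulr0 ?subr0.
Qed.

End GapPolynomial.

(* If
   rhs is the binomial transform of dlt, then L(D'_b) = dlt b, and the
   identity F_k = D_k - a^k - (-a)^k becomes a linear relation between
   rhs 0, ..., rhs k and dlt k. *)
Section LinearForm.
Variables (R : comNzRingType) (a : R) (rhs dlt : nat -> R).
Hypothesis rhs_expansion :
  forall b, rhs b = \sum_(0 <= i < b./2.+1) expand_coef a b i * dlt (b - 2 * i).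

Definition lform m (P : {poly R}) : R := \sum_(i < m) P`_i * rhs i.

Lemma lform_Xn m c : (c < m)%N -> lform m 'X^c = rhs c.
Proof.
move=> lt_cm; rewrite /lform (bigD1 (Ordinal lt_cm)) //= coefXn eqxx mul1r.
rewrite big1 ?addr0 // => i neq_ic; rewrite coefXn.
rewrite (_ : (val i == c) = false) ?mul0r //.
by apply: contraNF neq_ic => /eqP ci; apply/eqP/val_inj.
Qed.

Lemma lform_sum m n (f : nat -> R) (g : nat -> {poly R}) :
  lform m (\sum_(0 <= i < n) (f i)%:P * g i) = \sum_(0 <= i < n) f i * lform m (g i).
Proof.
rewrite /lform; under eq_bigr do rewrite coef_sum mulr_suml.
rewrite exchange_big; apply: eq_bigr => i _; rewrite mulr_sumr.
by apply: eq_bigr => j _; rewrite coefCM mulrA.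
Qed.

Lemma lform_subC m P c : (0 < m)%N -> lform m (P - c%:P) = lform m P - c * rhs 0.
Proof.
case: m => // m _; rewrite /lform.
under eq_bigr do rewrite coefB mulrBl.
rewrite sumrB; congr (_ - _).
rewrite big_ord_recl coefC /= big1 ?addr0 // => i _.
by rewrite coefC mul0r.
Qed.

(* Applying L to X^b = sum_i C(b,i) bet^i D'_(b-2i) and comparing with
   rhs b = sum_i C(b,i) bet^i dlt (b-2i): by strong induction on b the
   terms i > 0 agree, hence so do the terms i = 0. *)
Lemma lform_dbasis m b : (b < m)%N -> lform m (dbasis a b) = dlt b.
Proof.
elim/ltn_ind: b => b IH lt_bm.
have := lform_Xn lt_bm; rewrite (expX_expansion a) /expansion lform_sum rhs_expansion.
rewrite !big_nat_recl // !expand_coef0 !mul1r muln0 subn0 => /eqP.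
rewrite -subr_eq0 opprD addrACA -sumrB big_nat_cond big1 ?addr0 ?subr_eq0 => [/eqP //|].
move=> i /andP[/andP[_ lt_i] _].
have le_b2 : (2 * b./2 <= b)%N by rewrite mul2n halfK leq_subr.
by rewrite IH ?subrr //; lia.
Qed.

(* L(F_k) computed in two ways: from the coefficients of F_k (whose leading
   one, in degree k, is 1) and from F_k = D'_k - a^k - (-a)^k. *)
Lemma lform_gap_poly k : (0 < k)%N ->
  \sum_(i < k) (gap_poly a k)`_i * rhs i + rhs k = dlt k - (a ^+ k + (- a) ^+ k) * rhs 0.
Proof.
move=> k_gt0.
have gapE : gap_poly a k = dbasis a k - (a ^+ k + (- a) ^+ k)%:P.
  rewrite gap_poly_dickson rmorphD !rmorphXn rmorphN /dbasis.
  by case: k k_gt0 => // k _; rewrite opprD addrA.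
transitivity (lform k.+1 (gap_poly a k)); last by rewrite gapE lform_subC // lform_dbasis.
rewrite /lform big_ord_recr /= gapE coefB coefC gtn_eqF //.
by case: k k_gt0 {gapE} => // k _; rewrite /dbasis coef_dickson_lead // subr0 mul1r.
Qed.

End LinearForm.

Lemma big_parity_reindex (V : nmodType) b (f : nat -> V) :
  \sum_(0 <= a < b.+1 | odd a == odd b) f a = \sum_(0 <= i < b./2.+1) f (b - 2 * i)%N.
Proof.
elim/ltn_ind: b f => -[|[|b]] IH f.
- by rewrite big_mkcond !big_nat1.
- by rewrite big_mkcond big_nat_recr //= !big_nat1 add0r.
have -> : \sum_(0 <= a < b.+3 | odd a == odd b.+2) f a =
          \sum_(0 <= a < b.+1 | odd a == odd b) f a + f b.+2.
  rewrite big_mkcond [in RHS]big_mkcond !big_nat_recr //= negbK eqxx.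
  by case: (odd b); rewrite /= addr0.
rewrite IH // [in RHS]big_nat_recl // muln0 subn0 addrC; congr (_ + _).
by apply: eq_big_nat => i _; congr f; lia.
Qed.

Section DeltaIdentity.
Variables (C : numClosedFieldType) (N : nat) (al : C) (A B : 'M[C]_N).

Definition binomial_rhs k : C :=
  \sum_(0 <= a < k.+1 | odd a == odd k)
    'C(k, (k + a)./2)%:R * (al * (1 - al)) ^+ (k - a)./2 * delta_t al A B a.

Lemma binomial_rhs_expansion b : binomial_rhs b =
  \sum_(0 <= i < b./2.+1) expand_coef al b i * delta_t al A B (b - 2 * i).
Proof.
rewrite /binomial_rhs big_parity_reindex; apply: eq_big_nat => i /andP[_ lt_i].
have le_b2 : (2 * b./2 <= b)%N by rewrite mul2n halfK leq_subr.
have -> : ((b + (b - 2 * i))./2 = b - i)%N.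
  by rewrite (_ : (b + (b - 2 * i) = (b - i).*2)%N) ?half_double // -mul2n; lia.
have -> : ((b - (b - 2 * i))./2 = i)%N.
  by rewrite (_ : (b - (b - 2 * i) = i.*2)%N) ?half_double // -mul2n; lia.
by rewrite bin_sub //; lia.
Qed.

Lemma binomial_rhs0 : binomial_rhs 0 = d0 al A.
Proof. by rewrite binomial_rhs_expansion big_nat1 expand_coef0 mul1r. Qed.

(* R satisfies the recursion defining Delta: the inner sums of Delta_next
   are the coefficients of F_(k+1), and L(F_(k+1)) is known. *)
Lemma binomial_rhs_next k :
  binomial_rhs k.+1 = Delta_next al A B k.+1 [seq binomial_rhs i | i <- iota 0 k.+1].
Proof.
have key := lform_gap_poly binomial_rhs_expansion (ltn0Sn k).
rewrite binomial_rhs0 /delta_t /= in key.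
rewrite /Delta_next (eq_bigr (fun i : 'I_k.+1 => (gap_poly al k.+1)`_i * binomial_rhs i));
  last by move=> i _; rewrite (nth_map 0%N) ?size_iota // nth_iota // coef_gap_poly // mulrC.
apply: (addrI (\sum_(i < k.+1) (gap_poly al k.+1)`_i * binomial_rhs i)); rewrite key.
by rewrite exprNn -signr_odd /=; case: (odd k); rewrite /= ?expr1 ?expr0; ring.
Qed.

Lemma Deltas_binomial k : Deltas al A B k = [seq binomial_rhs i | i <- iota 0 k.+1].
Proof.
elim: k => [|k IH]; first by rewrite /= binomial_rhs0.
have iotaS : iota 0 k.+2 = rcons (iota 0 k.+1) k.+1 by rewrite -cats1 -addn1 iotaD.
by rewrite [Deltas _ _ _ _]/= IH -binomial_rhs_next iotaS map_rcons.
Qed.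

Lemma Delta_t_binomial k : Delta_t al A B k = binomial_rhs k.
Proof. by rewrite /Delta_t Deltas_binomial (nth_map 0%N) ?size_iota // nth_iota. Qed.

End DeltaIdentity.

Theorem lemma5p3 (R : rcfType) (N : nat) (alpha : R)
    (A B : 'M[R[i]]_N) :
  0 < alpha < 1 ->
  orth_proj A -> orth_proj B ->
  forall k : nat, (1 <= k)%N ->
    Delta_t (alpha%:C)%C A B k =
    \sum_(0 <= a < k.+1 | odd a == odd k)
      'C(k, (k + a)./2)%:R * ((alpha * (1 - alpha))%:C)%C ^+ (k - a)./2
        * delta_t (alpha%:C)%C A B a.
Proof.
move=> _ _ _ k _.
have -> : ((alpha * (1 - alpha))%:C)%C = (alpha%:C)%C * (1 - (alpha%:C)%C).
  by rewrite rmorphM rmorphB rmorph1.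
exact: Delta_t_binomial.
Qed.
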